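(* Let $\mathcal H$ be a complex Hilbert space, $T\in\mathcal B(\mathcal H)$ left-invertible, and $L\in\mathcal B(\mathcal H)$ a left-inverse of $T$ (i.e. $LT=I$). Let $\phi(z)=1/z$ on $\mathbb C\setminus\{0\}$, extended to the Riemann sphere by $\phi(0)=\infty$, $\phi(\infty)=0$. Then, if $0\in\sigma(T)$, $$\mathbb C\setminus\phi(\sigma_l(L))\subseteq\sigma_r(T)\setminus\sigma_l(T),$$ while if $0\notin\sigma(T)$, then $\phi(\sigma(L))=\sigma(T)$. In either case $0\notin\partial\sigma(L)$ and $\phi(\partial\sigma(L))\subseteq\sigma_r(T)$.
   Context: $\sigma(A)$ is the spectrum of $A$; $\sigma_l(A)$ (left spectrum) is the set of $\lambda\in\mathbb C$ with $A-\lambda I$ not left-invertible, and $\sigma_r(A)$ (right spectrum) the set of $\lambda$ with $A-\lambda I$ not right-invertible. $\partial$ denotes topological boundary in $\mathbb C$. *)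

From mathcomp Require Import all_boot all_order all_algebra.
From mathcomp Require Import complex.
From mathcomp Require Import all_classical all_reals all_analysis.
Import Order.TTheory GRing.Theory Num.Theory.
Import numFieldNormedType.Exports.

Set Implicit Arguments.
Unset Strict Implicit.
Unset Printing Implicit Defensive.

Local Open Scope ring_scope.
Local Open Scope classical_set_scope.

Notation Cplx R := (R[i] : numFieldType) (only parsing).

Section Hilbert.
Variable R : realType.
Variable V : completeNormedModType (Cplx R).

(* Together with completeness of V this makes V a complex Hilbert space. *)
Definition is_inner_product (ip : V -> V -> Cplx R) : Prop :=
  [/\ forall (a : Cplx R) (x y z : V), ip (a *: x + y) z = a * ip x z + ip y z,
      forall x y : V, ip y x = (ip x y)^*
    & forall x : V, `|x| ^+ 2 = ip x x].

Definition bounded_op (A : V -> V) : Prop :=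
  (forall (a : Cplx R) (x y : V), A (a *: x + y) = a *: A x + A y)
  /\ continuous A.

Definition left_invertible (A : V -> V) : Prop :=
  exists B : V -> V, bounded_op B /\ forall x, B (A x) = x.
Definition right_invertible (A : V -> V) : Prop :=
  exists B : V -> V, bounded_op B /\ forall x, A (B x) = x.
Definition invertible (A : V -> V) : Prop :=
  exists B : V -> V, bounded_op B /\ (forall x, B (A x) = x) /\ (forall x, A (B x) = x).

Definition shift_op (A : V -> V) (l : Cplx R) : V -> V := fun x => A x - l *: x.

Definition spectrum (A : V -> V) : set (Cplx R) :=
  [set l | ~ invertible (shift_op A l)].
Definition left_spectrum (A : V -> V) : set (Cplx R) :=
  [set l | ~ left_invertible (shift_op A l)].
Definition right_spectrum (A : V -> V) : set (Cplx R) :=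
  [set l | ~ right_invertible (shift_op A l)].
End Hilbert.

Definition boundary (R : realType) (S : set (Cplx R)) : set (Cplx R) :=
  closure S `\` interior S.

(* Riemann sphere: None stands for the point at infinity. *)
Definition sphere (R : realType) := option (Cplx R).

Definition phi (R : realType) (z : sphere R) : sphere R :=
  match z with
  | Some w => if w == 0 then None else Some w^-1
  | None => Some 0
  end.
Arguments phi {R} z.
Arguments boundary {R} S.

(* For w <> 0 the identity L - w = -w L (T - 1/w), valid because LT = I,
   transfers left and right invertibility between L - w and T - 1/w; when T
   is invertible L = T^-1, and this gives phi(sigma(L)) = sigma(T).
   If 0 is in sigma(T), L has a kernel vector x0 <> 0 (otherwise TL = I).
   For small l the vector (I - lT)^-1 x0 lies in the kernel of L - l, so
   sigma(L) contains a disc around 0; and if L - 1/z is left invertible, a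
   right inverse R of T - z would give (L - 1/z) R x0 = -(1/z) L x0 = 0,
   hence x0 = 0. Finally, at a boundary point w of sigma(L), a right inverse
   of L - w is a two-sided inverse: Neumann-series perturbation carries it to
   the inverse of L - w' for a nearby resolvent point w', which yields a
   uniform bound, and perturbing back makes L - w invertible, contradicting
   the closedness of sigma(L). So T - 1/w is not right invertible. *)

From mathcomp Require Import all_boot all_order all_algebra.
From mathcomp Require Import complex.
From mathcomp Require Import all_classical all_reals all_analysis.
From mathcomp.algebra_tactics Require Import ring.
Import Order.TTheory GRing.Theory Num.Theory.
Import numFieldNormedType.Exports.
Local Open Scope ring_scope.
Local Open Scope classical_set_scope.
Set Implicit Arguments.
Unset Strict Implicit.
Unset Printing Implicit Defensive.

Section BoundedOperators.
Context {R : realType} {V : completeNormedModType (Cplx R)}.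
Implicit Types (A B : V -> V) (x y : V).

Lemma bounded_opB A : bounded_op A -> {morph A : x y / x - y}.
Proof. by case=> /zmod_morphism_linear. Qed.

Lemma bounded_opZ A : bounded_op A -> scalable A.
Proof. by case=> /scalable_linear. Qed.

Lemma bounded_opD A : bounded_op A -> {morph A : x y / x + y}.
Proof. by case=> lA _ x y; rewrite -[x in LHS]scale1r lA scale1r. Qed.

Lemma bounded_op0 A : bounded_op A -> A 0 = 0.
Proof. by move=> hA; rewrite -[X in A X](subrr 0) bounded_opB // subrr. Qed.

Lemma bounded_op_of_bound A (C : Cplx R) : linear A -> 0 < C ->
  (forall x, `|A x| <= C * `|x|) -> bounded_op A.
Proof.
move=> lA C0 hC; split=> // x; apply/cvgrPdist_lt => e e0.
apply: filterS (nbhsx_ballx x (e / C) _); last by rewrite divr_gt0.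
move=> z; rewrite -ball_normE /= => hz.
rewrite -(zmod_morphism_linear lA); apply: le_lt_trans (hC _) _.
by rewrite mulrC -ltr_pdivlMr.
Qed.

Lemma bounded_op_bound A : bounded_op A ->
  exists2 C : Cplx R, 0 < C & forall x, `|A x| <= C * `|x|.
Proof.
move=> hA; have /cvgrPdist_lt/(_ 1 ltr01) := hA.2 0.
case/nbhs_ballP => d d0 hd; exists (2 / d); first by rewrite divr_gt0.
move=> x; have [->|x0] := eqVneq x 0; first by rewrite bounded_op0 // !normr0 mulr0.
have nx : 0 < `|x| by rewrite normr_gt0.
pose t : Cplx R := d / (2 * `|x|).
have t0 : 0 < t by rewrite divr_gt0 // mulr_gt0.
have : ball 0 d (t *: x).
  rewrite -ball_normE /= sub0r normrN normrZ gtr0_norm //.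
  have -> : t * `|x| = d / 2 by rewrite /t; field; rewrite gt_eqF.
  by rewrite ltr_pdivrMr // ltr_pMr // ltr1n.
move/hd; rewrite /= bounded_op0 // sub0r normrN bounded_opZ // normrZ gtr0_norm // => h.
have -> : 2 / d * `|x| = t^-1 by rewrite /t; field; rewrite ?gt_eqF.
by rewrite -(ler_pM2l t0) mulfV ?gt_eqF // ltW.
Qed.

Lemma bounded_op_comp A B : bounded_op A -> bounded_op B -> bounded_op (A \o B).
Proof.
move=> hA hB; have [CA CA0 hCA] := bounded_op_bound hA.
have [CB CB0 hCB] := bounded_op_bound hB.
apply: (bounded_op_of_bound (C := CA * CB)); first by move=> a x y /=; rewrite hB.1 hA.1.
  by rewrite mulr_gt0.
by move=> x; apply: le_trans (hCA _) _; rewrite -mulrA ler_pM2l.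
Qed.

Lemma bounded_op_add A B : bounded_op A -> bounded_op B -> bounded_op (A \+ B).
Proof.
move=> hA hB; have [CA CA0 hCA] := bounded_op_bound hA.
have [CB CB0 hCB] := bounded_op_bound hB.
apply: (bounded_op_of_bound (C := CA + CB)).
- by move=> a x y /=; rewrite hB.1 hA.1 scalerDr addrACA.
- by rewrite addr_gt0.
- by move=> x; apply: le_trans (ler_normD _ _) _; rewrite mulrDl lerD.
Qed.

Lemma bounded_op_scale (c : Cplx R) A : bounded_op A -> bounded_op (c \*: A).
Proof.
move=> hA; have [CA CA0 hCA] := bounded_op_bound hA.
apply: (bounded_op_of_bound (C := (`|c| + 1) * CA)).
- by move=> a x y /=; rewrite hA.1 scalerDr !scalerA mulrC.
- by rewrite mulr_gt0 // ltr_pwDr.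
- by move=> x; rewrite /= normrZ -mulrA ler_pM ?lerDl ?hCA.
Qed.

Lemma bounded_op_id : bounded_op (@id V).
Proof. by apply: (bounded_op_of_bound (C := 1)) => // x; rewrite mul1r. Qed.

Lemma bounded_op_shift A (w : Cplx R) : bounded_op A -> bounded_op (shift_op A w).
Proof.
move=> hA; have := bounded_op_add hA (bounded_op_scale (- w) bounded_op_id).
by congr bounded_op; apply/funext => x; rewrite /shift_op /= scaleNr.
Qed.

Lemma shift_op0 A : shift_op A 0 = A.
Proof. by apply/funext => x; rewrite /shift_op scale0r subr0. Qed.

Lemma shift_op_recenter A (w w' : Cplx R) x :
  shift_op A w' x = shift_op A w x - (w' - w) *: x.
Proof. by rewrite /shift_op scalerBl opprB addrA subrK. Qed.

End BoundedOperators.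

Lemma exists_mul_half_expr_lt {R : realType} (c e : Cplx R) : 0 <= c -> 0 < e ->
  exists N : nat, c * 2^-1 ^+ N < e.
Proof.
(* [Cplx R] has no archimedean structure, so [N] is read off the real part of [c / e]. *)
move=> c0 e0; have ce : 0 <= c / e by rewrite divr_ge0 // ltW.
have ReE : ((complex.Re (c / e))%:C)%C = c / e := RRe_real (ger0_real ce).
have Re0 : 0 <= complex.Re (c / e) by rewrite -ler0c ReE.
pose N := Num.Def.archi_bound (complex.Re (c / e)).
exists N; rewrite exprVn ltr_pdivrMr ?exprn_gt0 // mulrC -ltr_pdivrMr // -ReE.
apply: (@lt_le_trans _ _ N%:R).
  by rewrite -(rmorph_nat (real_complex R)) ltcR archi_boundP.
by rewrite -natrX ler_nat ltnW // ltn_expl.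
Qed.

Section Neumann.
Context {R : realType} {V : completeNormedModType (Cplx R)}.
Variable A : V -> V.
Hypotheses (hA : bounded_op A) (A_le_half : forall x, `|A x| <= 2^-1 * `|x|).

Lemma neumann_injective x1 x2 : x1 - A x1 = x2 - A x2 -> x1 = x2.
Proof.
move=> e; have dA : x1 - x2 = A x1 - A x2.
  by apply/eqP; rewrite subr_eq -addrA [- _ + x2]addrC -e subrKC.
have : `|x1 - x2| <= 2^-1 * `|x1 - x2| by rewrite {1}dA -bounded_opB.
rewrite -subr_ge0 -[X in _ - X]mul1r -mulrBl nmulr_rge0; last first.
  by rewrite subr_lt0 invf_lt1 // ltr1n.
by rewrite normr_le0 subr_eq0 => /eqP.
Qed.

Section NeumannSeries.
Variable y : V.
Let s n := iter n (fun v => y + A v) 0.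

Let s_succ n : s n.+1 - s n = iter n A y.
Proof.
elim: n => [|n IHn]; first by rewrite /s /= bounded_op0 // !addr0 subr0.
rewrite iterS -IHn bounded_opB //.
change ((y + A (s n.+1)) - (y + A (s n)) = A (s n.+1) - A (s n)).
by rewrite opprD addrACA subrr add0r.
Qed.

Let iter_le n : `|iter n A y| <= 2^-1 ^+ n * `|y|.
Proof.
elim: n => [|n IHn]; first by rewrite expr0 mul1r.
rewrite iterS exprS -mulrA; apply: le_trans (A_le_half _) _.
by rewrite ler_pM2l // invr_gt0 ltr0n.
Qed.

Let s_dist n m : `|s (n + m) - s n| <= 2 * 2^-1 ^+ n * `|y|.
Proof.
suff : `|s (n + m) - s n| + 2 * 2^-1 ^+ (n + m) * `|y| <= 2 * 2^-1 ^+ n * `|y|.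
  by apply: le_trans; rewrite lerDl !mulr_ge0 // exprn_ge0 // invr_ge0 ler0n.
elim: m => [|m IHm]; first by rewrite addn0 subrr normr0 add0r.
apply: le_trans IHm; rewrite addnS.
have -> : 2 * 2^-1 ^+ (n + m).+1 * `|y| = 2^-1 ^+ (n + m) * `|y|.
  by rewrite exprS mulrA mulfV ?pnatr_eq0 // mul1r.
have -> : 2 * 2^-1 ^+ (n + m) * `|y| = 2^-1 ^+ (n + m) * `|y| + 2^-1 ^+ (n + m) * `|y|.
  by rewrite -mulrA mulr_natl mulr2n.
apply: le_trans (lerD (ler_distD (s (n + m)) _ _) (lexx _)) _.
by rewrite s_succ [X in X + _ <= _]addrC -addrA lerD2l lerD2r.
Qed.

Let s_cvg : cvgn s.
Proof.
have s_near N n : (N <= n)%N -> `|s n - s N| <= 2 * 2^-1 ^+ N * `|y|.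
  by move/subnKC <-; exact: s_dist.
apply/cauchy_cvgP/cauchy_ballP => e e0.
have [N hN] := exists_mul_half_expr_lt (mulr_ge0 (ler0n _ 4) (normr_ge0 y)) e0.
near_simpl; exists ([set n | N <= n]%N, [set n | N <= n]%N); first by split; exists N.
move=> [n m] [/= Nn Nm]; rewrite -ball_normE /=.
apply: le_lt_trans (ler_distD (s N) _ _) _.
apply: le_lt_trans (lerD (s_near _ _ Nn) _) _; first by rewrite distrC; apply: s_near.
by apply: le_lt_trans hN; rewrite (_ : _ + _ = 4 * `|y| * 2^-1 ^+ N) //; ring.
Qed.

Lemma neumann_surjective : exists x, x - A x = y.
Proof.
exists (limn s).
have s_succ_cvg : s n.+1 @[n --> \oo] --> limn s by rewrite cvg_shiftS.
have : y + A (s n) @[n --> \oo] --> y + A (limn s).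
  exact: cvgD (cvg_cst y) (continuous_cvg _ (hA.2 _) s_cvg).
by move/(cvg_unique (@norm_hausdorff _ V) s_succ_cvg) => {1}->; rewrite addrK.
Qed.

End NeumannSeries.

Lemma neumann_inverse : exists B, [/\ bounded_op B,
  forall y, B y - A (B y) = y, forall x, B (x - A x) = x &
  forall y, `|B y| <= 2 * `|y|].
Proof.
pose B y := projT1 (cid (neumann_surjective y)).
have BK y : B y - A (B y) = y := projT2 (cid (neumann_surjective y)).
have B_le y : `|B y| <= 2 * `|y|.
  have : `|B y| <= `|y| + 2^-1 * `|B y|.
    rewrite -{1}(subrK (A (B y)) (B y)) BK; apply: le_trans (ler_normD _ _) _.
    by rewrite lerD2l.
  rewrite -lerBlDr (_ : _ - _ = 2^-1 * `|B y|); last by field.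
  by rewrite ler_pdivrMl ?ltr0n.
exists B; split=> // [|x]; last by apply: neumann_injective; rewrite BK.
apply: (bounded_op_of_bound (C := 2) _ _ B_le); last by rewrite ltr0n.
by move=> a x1 x2; apply: neumann_injective; rewrite BK hA.1 opprD addrACA -scalerBr !BK.
Qed.

End Neumann.

Lemma neumann_inverse_scale {R : realType} {V : completeNormedModType (Cplx R)}
    (S : V -> V) (c M : Cplx R) :
  bounded_op S -> (forall y, `|S y| <= M * `|y|) -> `|c| * M <= 2^-1 ->
  exists B, [/\ bounded_op B, forall y, B y - c *: S (B y) = y,
    forall x, B (x - c *: S x) = x & forall y, `|B y| <= 2 * `|y|].
Proof.
move=> hS hM hc; apply: (@neumann_inverse _ _ (c \*: S)); first exact: bounded_op_scale.
move=> x; rewrite /= normrZ; apply: le_trans (ler_wpM2l (normr_ge0 c) (hM x)) _.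
by rewrite mulrA ler_wpM2r.
Qed.

Section Perturbation.
Context {R : realType} {V : completeNormedModType (Cplx R)}.
Variable A : V -> V.
Hypothesis hA : bounded_op A.

Lemma invertible_shift_near S (w w' M : Cplx R) : bounded_op S ->
  (forall x, S (shift_op A w x) = x) -> (forall y, shift_op A w (S y) = y) ->
  (forall y, `|S y| <= M * `|y|) -> `|w' - w| * M <= 2^-1 ->
  invertible (shift_op A w').
Proof.
move=> hS SK KS hM hc; have [P [hP PK KP _]] := neumann_inverse_scale hS hM hc.
have shiftE x : shift_op A w' x = shift_op A w (x - (w' - w) *: S x).
  have hAw := bounded_op_shift w hA.
  by rewrite (bounded_opB hAw) (bounded_opZ hAw) KS -shift_op_recenter.
exists (P \o S); split; first exact: bounded_op_comp.
by split=> [x|y]; rewrite shiftE /= ?SK ?KP // PK KS.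
Qed.

Lemma right_invertible_shift_near Rr (w w' M : Cplx R) :
  (forall y, shift_op A w (Rr y) = y) -> bounded_op Rr ->
  (forall y, `|Rr y| <= M * `|y|) -> 0 <= M -> `|w' - w| * M <= 2^-1 ->
  exists2 Rr' : V -> V, forall y, shift_op A w' (Rr' y) = y &
    forall y, `|Rr' y| <= 2 * M * `|y|.
Proof.
move=> KR hR hM M0 hc; have [P [_ PK _ P_le]] := neumann_inverse_scale hR hM hc.
exists (Rr \o P) => y /=; first by rewrite (shift_op_recenter _ w) KR PK.
by apply: le_trans (hM _) _; rewrite (mulrC 2) -mulrA ler_wpM2l.
Qed.

Lemma spectrum_closed : closed (spectrum A).
Proof.
move=> w clw [S [hS [SK KS]]]; have [M M0 hM] := bounded_op_bound hS.
have r0 : 0 < 2^-1 / M :> Cplx R by rewrite divr_gt0 // invr_gt0 ltr0n.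
have [w' [sw' bw']] := clw _ (nbhsx_ballx w _ r0).
apply: sw'; apply: (invertible_shift_near hS SK KS hM).
by move: bw'; rewrite -ball_normE /= distrC ltr_pdivlMr // => /ltW.
Qed.

Lemma right_invertible_shift_invertible (w : Cplx R) : ~ interior (spectrum A) w ->
  right_invertible (shift_op A w) -> invertible (shift_op A w).
Proof.
move=> notint [Rr [hR KR]]; have [M M0 hM] := bounded_op_bound hR.
have [w' w'w invw'] : exists2 w', `|w' - w| * M <= 4^-1 & invertible (shift_op A w').
  apply: contrapT => hn; apply: notint; apply/nbhs_ballP.
  exists (4^-1 / M) => [|w' bw' invw']; first by rewrite /= divr_gt0 // invr_gt0 ltr0n.
  apply: hn; exists w' => //.
  by move: bw'; rewrite -ball_normE /= distrC ltr_pdivlMr // => /ltW.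
have quarter_le_half : (4^-1 : Cplx R) <= 2^-1 by rewrite lef_pV2 ?posrE ?ler_nat.
have [Rr' KR' Rr'_le] :=
  right_invertible_shift_near KR hR hM (ltW M0) (le_trans w'w quarter_le_half).
case: invw' => S [hS [SK KS]].
(* The inverse of [A - w'] is the perturbed right inverse, so it inherits its bound. *)
have SE y : S y = Rr' y by rewrite -{1}(KR' y) SK.
apply: (@invertible_shift_near S w' w (2 * M) hS SK KS); first by move=> y; rewrite SE.
rewrite distrC mulrCA (le_trans (ler_wpM2l _ w'w)) ?ler0n //.
by rewrite (_ : 2 * 4^-1 = 2^-1) //; field.
Qed.

End Perturbation.

Lemma shift_op_left_inverse {R : realType} {V : completeNormedModType (Cplx R)}
    (T L : V -> V) (w : Cplx R) :
  bounded_op L -> (forall x, L (T x) = x) -> w != 0 ->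
  forall x, shift_op L w x = - w *: L (shift_op T w^-1 x).
Proof.
move=> hL LT w0 x; rewrite /shift_op (bounded_opB hL) (bounded_opZ hL) LT scalerBr scalerA.
by rewrite mulNr mulfV // scaleN1r opprK addrC scaleNr.
Qed.

Lemma invertible_shift_inverse {R : realType} {V : completeNormedModType (Cplx R)}
    (A B : V -> V) (w : Cplx R) :
  bounded_op A -> bounded_op B -> (forall x, B (A x) = x) -> (forall x, A (B x) = x) ->
  w != 0 -> invertible (shift_op A w^-1) -> invertible (shift_op B w).
Proof.
move=> hA hB BA AB w0 [G [hG [GK KG]]].
exists (G \o A \o (- w^-1) \*: id); split.
  exact: bounded_op_comp (bounded_op_comp hG hA) (bounded_op_scale _ bounded_op_id).
split=> [x|y] /=; rewrite (shift_op_left_inverse hB BA w0).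
  by rewrite scalerA mulrNN mulVf // scale1r AB GK.
by rewrite KG BA scalerA mulrNN mulfV // scale1r.
Qed.

Lemma phi_Some {R : realType} (w : Cplx R) : w != 0 -> phi (Some w) = Some w^-1.
Proof. by move=> w0; rewrite /= (negbTE w0). Qed.

Section LeftInverse.
Context {R : realType} {V : completeNormedModType (Cplx R)}.
Variables T L : V -> V.
Hypotheses (hT : bounded_op T) (hL : bounded_op L) (LT : forall x, L (T x) = x).

Lemma left_inverse_kernel : spectrum T 0 -> exists2 x0, x0 != 0 & L x0 = 0.
Proof.
move=> sT0; apply: contrapT => kerL; apply: sT0; rewrite shift_op0.
exists L; split=> //; split=> // x.
apply/eqP; rewrite -subr_eq0; apply/negPn/negP => nz; apply: kerL.
by exists (T (L x) - x) => //; rewrite (bounded_opB hL) LT subrr.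
Qed.

Lemma left_inverse_is_right_inverse : ~ spectrum T 0 -> forall y, T (L y) = y.
Proof.
rewrite /spectrum /= shift_op0 => /contrapT [S [_ [ST TS]]] y.
by rewrite -{1}(TS y) LT TS.
Qed.

Lemma interior_spectrum_left_inverse0 : spectrum T 0 -> interior (spectrum L) 0.
Proof.
move=> sT0; have [x0 x00 Lx0] := left_inverse_kernel sT0.
have [C C0 hC] := bounded_op_bound hT.
apply/nbhs_ballP; exists (2^-1 / C) => [|l]; first by rewrite /= divr_gt0 // invr_gt0 ltr0n.
rewrite -ball_normE /= sub0r normrN ltr_pdivlMr // => /ltW hl [G [hG [GK _]]].
have [P [_ PK _ _]] := neumann_inverse_scale hT hC hl.
have Px0 : P x0 != 0.
  apply: contra_neq x00 => Px0.
  by rewrite -(PK x0) Px0 (bounded_op0 hT) scaler0 subr0.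
have LPx0 : shift_op L l (P x0) = 0.
  rewrite /shift_op -{1}(subrK (l *: T (P x0)) (P x0)) PK.
  by rewrite (bounded_opD hL) (bounded_opZ hL) Lx0 LT add0r subrr.
by move: Px0; rewrite -(GK (P x0)) LPx0 (bounded_op0 hG) eqxx.
Qed.

Lemma not_boundary_spectrum_left_inverse0 : ~ boundary (spectrum L) 0.
Proof.
case=> cl0 int0; have [sT0|nsT0] := pselect (spectrum T 0).
  exact: int0 (interior_spectrum_left_inverse0 sT0).
apply: (spectrum_closed hL cl0); rewrite shift_op0.
by exists T; split=> //; split=> // y; rewrite left_inverse_is_right_inverse.
Qed.

Lemma right_spectrum0 : spectrum T 0 -> right_spectrum T 0.
Proof.
rewrite /right_spectrum /= shift_op0 => sT0 [B [_ TB]]; apply: sT0; rewrite shift_op0.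
by exists L; split=> //; split=> // x; rewrite -{1}(TB x) LT TB.
Qed.

Lemma not_left_spectrum_inv w : w != 0 -> ~ left_spectrum L w -> ~ left_spectrum T w^-1.
Proof.
move=> w0 /contrapT [M [hM MK]] []; exists (M \o (- w) \*: L); split.
  exact: bounded_op_comp hM (bounded_op_scale _ hL).
by move=> x; rewrite /= -(shift_op_left_inverse hL LT w0).
Qed.

Lemma right_spectrum_inv w : spectrum T 0 -> w != 0 -> ~ left_spectrum L w ->
  right_spectrum T w^-1.
Proof.
move=> sT0 w0 /contrapT [M [hM MK]] [Rr [_ TR]].
have [x0 x00 Lx0] := left_inverse_kernel sT0.
have : shift_op L w (Rr x0) = 0 by rewrite (shift_op_left_inverse hL LT w0) TR Lx0 scaler0.
move/(congr1 M); rewrite MK (bounded_op0 hM) => Rx0.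
by move: x00; rewrite -(TR x0) Rx0 (bounded_op0 (bounded_op_shift _ hT)) eqxx.
Qed.

Lemma compl_phi_left_spectrum_sub : spectrum T 0 ->
  [set z | ~ (phi @` (Some @` left_spectrum L)) (Some z)]
    `<=` right_spectrum T `\` left_spectrum T.
Proof.
move=> sT0 z phiz; have [->|z0] := eqVneq z 0.
  split; first exact: right_spectrum0.
  by rewrite /left_spectrum /= shift_op0; apply; exists L.
have z'0 : z^-1 != 0 by rewrite invr_eq0.
have nlz : ~ left_spectrum L z^-1.
  by move=> lz; apply: phiz; exists (Some z^-1); [exists z^-1 | rewrite phi_Some // invrK].
by rewrite -[z]invrK; split; [exact: right_spectrum_inv | exact: not_left_spectrum_inv].
Qed.

Lemma phi_spectrum_left_inverse : ~ spectrum T 0 ->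
  phi @` (Some @` spectrum L) = Some @` spectrum T.
Proof.
move=> nsT0; have TL := left_inverse_is_right_inverse nsT0.
have nsL0 : ~ spectrum L 0.
  by rewrite /spectrum /= shift_op0; apply; exists T; split=> //; split.
apply/seteqP; split=> [_ [_ [w sLw <-] <-]|_ [w sTw <-]].
  have w0 : w != 0 by apply/eqP => w0; apply: nsL0; rewrite -w0.
  rewrite phi_Some //; exists w^-1 => // invT; apply: sLw.
  exact: invertible_shift_inverse hT hL LT TL w0 invT.
have w0 : w != 0 by apply/eqP => w0; apply: nsT0; rewrite -w0.
exists (Some w^-1); last by rewrite phi_Some ?invr_eq0 // invrK.
exists w^-1 => // invL; apply: sTw.
exact: invertible_shift_inverse hL hT TL LT w0 invL.
Qed.

Lemma phi_boundary_spectrum_sub :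
  phi @` (Some @` boundary (spectrum L)) `<=` Some @` right_spectrum T.
Proof.
move=> _ [_ [w bw <-] <-]; have [clw intw] := bw.
have w0 : w != 0.
  by apply/eqP => w0; apply: not_boundary_spectrum_left_inverse0; rewrite -w0.
rewrite phi_Some //; exists w^-1 => // -[Rr [hR TR]].
apply: (spectrum_closed hL clw); apply: (right_invertible_shift_invertible hL intw).
exists (Rr \o T \o (- w^-1) \*: id); split.
  exact: bounded_op_comp (bounded_op_comp hR hT) (bounded_op_scale _ bounded_op_id).
by move=> y; rewrite /= (shift_op_left_inverse hL LT w0) TR LT scalerA mulrNN mulfV // scale1r.
Qed.

End LeftInverse.

Theorem theorem4p1 (R : realType) (V : completeNormedModType (Cplx R))
    (ip : V -> V -> Cplx R) (Hip : is_inner_product ip)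
    (T L : V -> V) (HT : bounded_op T) (HL : bounded_op L)
    (HTl : left_invertible T) (HLT : forall x, L (T x) = x) :
  (spectrum T 0 ->
     [set z : Cplx R | ~ (phi @` (Some @` left_spectrum L)) (Some z)]
       `<=` right_spectrum T `\` left_spectrum T)
  /\ (~ spectrum T 0 ->
        phi @` (Some @` spectrum L) = Some @` spectrum T)
  /\ ~ boundary (spectrum L) 0
  /\ phi @` (Some @` boundary (spectrum L)) `<=` Some @` right_spectrum T.
Proof.
split; first exact: compl_phi_left_spectrum_sub HT HL HLT.
split; first exact: phi_spectrum_left_inverse HT HL HLT.
split; first exact: not_boundary_spectrum_left_inverse0 HT HL HLT.
exact: phi_boundary_spectrum_sub HT HL HLT.
Qed.
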